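(* Let $G$ be a finite graph and $\alpha(G)$ its independence number. (a) For every integer $b\ge 1$, $\phi^0_b(G)\ge \phi(G)$; moreover $\lim_{b\to\infty}\phi^0_b(G)=\phi(G)$. (b) For all integers $a'\ge a\ge 0$ and $b'\ge b\ge 1$, $\phi^a_b(G)\ge \phi^{a'}_{b'}(G)$. (c) For all integers $a\ge 0$ and $b\ge 1$, $\phi^a_b(G)\ge \frac{|V(G)|-a\alpha(G)}{\bar{\alpha}(G)}$.
   Context: An independent set $F$ of $G$ is a free independent set if it is contained in at least two distinct maximal independent sets of $G$; $\bar{\alpha}(G)$ is the maximum size of a free independent set. An edge $e=uv$ supports a free independent set $F$ if $F\cap(N(u)\cup N(v))=\emptyset$. The free chromatic number $\phi(G)$ is the minimum $t$ such that $V(G)$ can be partitioned into $t$ free independent sets ($\infty$ if impossible). For integers $a\ge0$, $b\ge1$, the $(a,b)$-free chromatic number $\phi^a_b(G)$ is the minimum natural number $t$ such that: (1) $V(G)$ is partitioned into independent sets $V_1,\dots,V_t$, of which $V_1,\dots,V_{t-a}$ are free independent sets; and (2) there are edges $e_1,\dots,e_{t-a}$ (not necessarily distinct) with $e_i$ supporting $V_i$ for each $i$, such that every vertex $v$ is incident with at most $b$ of the edges $e_1,\dots,e_{t-a}$. If no such $t$ exists, $\phi^a_b(G)=\infty$. *)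

From mathcomp Require Import all_boot all_order all_algebra.
From Stdlib Require Import ClassicalDescription.
Set Implicit Arguments. Unset Strict Implicit. Unset Printing Implicit Defensive.

Section FreeColoring.
Variables (T : finType) (g : rel T).

Definition independent (S : {set T}) : bool :=
  [forall x in S, forall y in S, ~~ g x y].

Definition maximal_independent (S : {set T}) : bool := maxset independent S.

Definition free_independent (F : {set T}) : bool :=
  independent F &&
  [exists M1 : {set T}, exists M2 : {set T},
     [&& maximal_independent M1, maximal_independent M2, M1 != M2,
         F \subset M1 & F \subset M2]].

Definition nbhd (u : T) : {set T} := [set x | g u x].

Definition is_edge (e : T * T) : bool := g e.1 e.2.

Definition supports (e : T * T) (F : {set T}) : bool :=
  F :&: (nbhd e.1 :|: nbhd e.2) == set0.

Definition alpha : nat := \max_(S : {set T} | independent S) #|S|.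

(* alpha-bar(G): maximum size of a free independent set (0 if there is none) *)
Definition alpha_bar : nat := \max_(F : {set T} | free_independent F) #|F|.

(* P : 'I_t -> {set T} is a partition of V(G) into t (possibly empty) parts *)
Definition is_partition (t : nat) (P : {ffun 'I_t -> {set T}}) : bool :=
  [forall i, forall j, (i != j) ==> [disjoint P i & P j]] &&
  (\bigcup_i P i == [set: T]).

Definition free_colorable (t : nat) : bool :=
  [exists P : {ffun 'I_t -> {set T}},
     is_partition P && [forall i, free_independent (P i)]].

(* the conditions (1),(2) in the definition of phi^a_b, for a given t;
   parts with index i < t - a (i.e. V_1..V_{t-a}) are free and supported by
   the edge E i; each vertex is incident with at most b of these edges,
   counted with multiplicity. *)
Definition ab_colorable (a b t : nat) : bool :=
  [exists P : {ffun 'I_t -> {set T}}, exists E : {ffun 'I_t -> T * T},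
    [&& is_partition P,
        [forall i, independent (P i)],
        [forall i : 'I_t, (i < t - a) ==>
            [&& free_independent (P i), is_edge (E i) & supports (E i) (P i)]] &
        [forall v : T,
            #|[set i : 'I_t | (i < t - a) && ((v == (E i).1) || (v == (E i).2))]| <= b]]].

End FreeColoring.

(* extended naturals: None stands for infinity *)
Definition min_or_inf (p : pred nat) : option nat :=
  match excluded_middle_informative (exists n, p n) with
  | left H => Some (ex_minn H)
  | right _ => None
  end.

Definition phi (T : finType) (g : rel T) : option nat := min_or_inf (free_colorable g).

Definition phi_ab (T : finType) (g : rel T) (a b : nat) : option nat :=
  min_or_inf (ab_colorable g a b).

Definition le_inf (x y : option nat) : bool :=
  match x, y with
  | _, None => true
  | None, Some _ => false
  | Some m, Some n => m <= n
  end.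

(* convergence of a sequence in N ∪ {∞} (one-point compactification topology) *)
Definition converges_inf (u : nat -> option nat) (l : option nat) : Prop :=
  match l with
  | Some k => exists N, forall n, N <= n -> u n = Some k
  | None => forall M, exists N, forall n, N <= n -> le_inf (Some M) (u n)
  end.

(* A free independent set F lies in two distinct maximal independent sets M1, M2; a vertex
   u of M1 outside M2 has a neighbour v in M2 by maximality, and the edge uv supports F.
   So every free part of a partition carries a supporting edge, and with t <= b parts no
   vertex meets more than b of these edges: phi^0_b = phi as soon as b >= phi, and
   phi^0_b >= phi always.  Monotonicity in (a, b) holds because the conditions only weaken.
   Finally, counting vertices part by part gives |V| <= (t - a) alpha_bar + a alpha. *)
From mathcomp Require Import all_boot all_order all_algebra.
From Stdlib Require Import ClassicalDescription.
Import GRing.Theory Num.Theory.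
Set Implicit Arguments. Unset Strict Implicit.

Lemma min_or_inf_Some (p : pred nat) k : min_or_inf p = Some k ->
  p k /\ forall m, p m -> k <= m.
Proof.
rewrite /min_or_inf; case: excluded_middle_informative => // H [<-].
by case: ex_minnP.
Qed.

Lemma min_or_inf_None (p : pred nat) m : min_or_inf p = None -> ~~ p m.
Proof.
rewrite /min_or_inf; case: excluded_middle_informative => // H _.
by apply/negP => pm; apply: H; exists m.
Qed.

Lemma min_or_inf_eq_Some (p : pred nat) k : p k -> (forall m, p m -> k <= m) ->
  min_or_inf p = Some k.
Proof.
move=> pk k_min; case E: (min_or_inf p) => [j|]; last first.
  by rewrite (negbTE (min_or_inf_None k E)) in pk.
have [pj j_min] := min_or_inf_Some E.
by congr Some; apply/eqP; rewrite eqn_leq j_min // k_min.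
Qed.

Lemma le_inf_min_or_inf (p q : pred nat) : (forall t, q t -> p t) ->
  le_inf (min_or_inf p) (min_or_inf q).
Proof.
move=> qp; case Eq: (min_or_inf q) => [k|]; last by case: (min_or_inf p).
have [qk _] := min_or_inf_Some Eq.
case Ep: (min_or_inf p) => [j|]; last by have := min_or_inf_None k Ep; rewrite qp.
by have [_ j_min] := min_or_inf_Some Ep; apply/j_min/qp.
Qed.

Lemma leq_sum_split t s (F : 'I_t -> nat) m1 m2 : s <= t ->
  (forall i : 'I_t, i < s -> F i <= m1) -> (forall i, F i <= m2) ->
  \sum_i F i <= s * m1 + (t - s) * m2.
Proof.
move=> le_st F_lo F_hi.
pose G i := if i < s then m1 else m2.
apply: (@leq_trans (\sum_(i < t) G i)).
  by apply: leq_sum => i _; rewrite /G; case: ifP => [/F_lo|_].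
rewrite -(big_mkord xpredT G) (big_cat_nat (leq0n s) le_st) /=.
rewrite (@eq_big_nat _ _ _ 0 s G (fun _ => m1)); last first.
  by move=> i /andP[_ lt_is]; rewrite /G lt_is.
rewrite (@eq_big_nat _ _ _ s t G (fun _ => m2)); last first.
  by move=> i /andP[si _]; rewrite /G ltnNge si.
by rewrite !sum_nat_const_nat subn0.
Qed.

Section FreeColoringTheory.
Variables (T : finType) (g : rel T).

Lemma independent_nadj S x y : independent g S -> x \in S -> y \in S -> ~~ g x y.
Proof. by move=> /forall_inP S_ind xS; move/forall_inP: (S_ind x xS); apply. Qed.

Lemma leq_card_alpha S : independent g S -> #|S| <= alpha g.
Proof. exact: (@leq_bigmax_cond _ (independent g) (fun S : {set T} => #|S|)). Qed.

Lemma leq_card_alpha_bar F : free_independent g F -> #|F| <= alpha_bar g.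
Proof. exact: (@leq_bigmax_cond _ (free_independent g) (fun F : {set T} => #|F|)). Qed.

Lemma leq_card_bigcup t (P : 'I_t -> {set T}) : #|\bigcup_i P i| <= \sum_i #|P i|.
Proof.
apply: (big_rec2 (fun (A : {set T}) n => #|A| <= n)); first by rewrite cards0.
by move=> i A n _ le_An; apply: leq_trans (leq_card_setU _ _) (leq_add _ le_An).
Qed.

Lemma ab_colorable_mono a a' b b' t : a <= a' -> b <= b' ->
  ab_colorable g a b t -> ab_colorable g a' b' t.
Proof.
move=> le_aa' le_bb' /existsP[P /existsP[E /and4P[P_part P_ind P_free E_deg]]].
apply/existsP; exists P; apply/existsP; exists E; rewrite P_part P_ind /=.
have ltn_sub : forall i : 'I_t, i < t - a' -> i < t - a.
  by move=> i /leq_trans; apply; apply: leq_sub2l.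
apply/andP; split.
- apply/forall_inP => i /ltn_sub; exact: (implyP (forallP P_free i)).
- apply/forallP => v; apply: leq_trans (leq_trans (forallP E_deg v) le_bb').
  by apply/subset_leq_card/subsetP => i; rewrite !inE => /andP[/ltn_sub -> ->].
Qed.

Lemma ab_colorable_card a b t : ab_colorable g a b t ->
  #|T| <= t * alpha_bar g + a * alpha g.
Proof.
case/existsP=> P /existsP[E /and4P[/andP[_ /eqP P_cover] P_ind P_free _]].
rewrite -cardsT -P_cover; apply: leq_trans (leq_card_bigcup _) _.
apply: leq_trans (leq_sum_split (leq_subr a t) _ _) _ => [i lt_i|i|].
- apply: leq_card_alpha_bar.
  by have /implyP/(_ lt_i)/and3P[] := forallP P_free i.
- exact/leq_card_alpha/(forallP P_ind).
by rewrite leq_add ?leq_mul ?leq_subr // -minnE geq_minr.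
Qed.

Hypotheses (g_sym : symmetric g) (g_irr : irreflexive g).

Lemma maximal_independent_adj M u : maximal_independent g M -> u \notin M ->
  exists2 v, v \in M & g u v.
Proof.
move=> /maxsetP[M_ind M_max] uM.
have /forall_inPn[x xUM /forall_inPn[y yUM /negbNE gxy]] : ~~ independent g (u |: M).
  by apply: contra uM => uM_ind; rewrite -(M_max _ uM_ind (subsetUr _ _)) setU11.
move: xUM yUM gxy; rewrite !in_setU1.
case/orP=> [/eqP-> | xM] /orP[/eqP-> | yM] gxy.
- by rewrite g_irr in gxy.
- by exists y.
- by exists x; rewrite // g_sym.
- by rewrite (negbTE (independent_nadj M_ind xM yM)) in gxy.
Qed.

Lemma free_independent_supported F : free_independent g F ->
  exists e, is_edge g e && supports g e F.
Proof.
case/andP=> _ /existsP[M1 /existsP[M2 /and5P[M1_max M2_max M1_neq FM1 FM2]]].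
have [[M1_ind M1_sub] [M2_ind _]] := (maxsetP M1_max, maxsetP M2_max).
have /subsetPn[u uM1 uM2] : ~~ (M1 \subset M2).
  by apply: contra M1_neq => /(M1_sub _ M2_ind) ->.
have [v vM2 guv] := maximal_independent_adj M2_max uM2.
exists (u, v); rewrite /is_edge guv /supports /=.
apply/eqP/setP => x; rewrite !inE; apply/negP => /andP[xF /orP[gux|gvx]].
- by rewrite (negbTE (independent_nadj M1_ind uM1 (subsetP FM1 x xF))) in gux.
- by rewrite (negbTE (independent_nadj M2_ind vM2 (subsetP FM2 x xF))) in gvx.
Qed.

Lemma ab_colorable0_free b t : ab_colorable g 0 b t -> free_colorable g t.
Proof.
case/existsP=> P /existsP[E /and4P[P_part _ P_free _]].
apply/existsP; exists P; rewrite P_part; apply/forallP => i; rewrite subn0 in P_free.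
by have /implyP/(_ (ltn_ord i))/and3P[] := forallP P_free i.
Qed.

Lemma free_ab_colorable0 b t : t <= b -> free_colorable g t -> ab_colorable g 0 b t.
Proof.
move=> le_tb /existsP[P /andP[P_part /forallP P_free]].
have E_ex i : exists e, is_edge g e && supports g e (P i).
  exact/free_independent_supported/P_free.
apply/existsP; exists P; apply/existsP; exists [ffun i => xchoose (E_ex i)].
rewrite P_part /=; apply/and3P; split.
- by apply/forallP => i; case/andP: (P_free i).
- apply/forall_inP => i _; rewrite ffunE P_free.
  exact: xchooseP (E_ex i).
- apply/forallP => v; apply: leq_trans (max_card _) _.
  by rewrite card_ord.
Qed.

Lemma phi_le_phi_ab0 b : le_inf (phi g) (phi_ab g 0 b).
Proof. exact/le_inf_min_or_inf/ab_colorable0_free. Qed.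

Lemma phi_ab0_eq_phi k b : phi g = Some k -> k <= b -> phi_ab g 0 b = Some k.
Proof.
move=> /min_or_inf_Some[k_col k_min] le_kb; apply: min_or_inf_eq_Some.
  exact: free_ab_colorable0.
by move=> m /ab_colorable0_free; apply: k_min.
Qed.

End FreeColoringTheory.

Theorem mainTheorem6 (T : finType) (g : rel T)
    (g_sym : symmetric g) (g_irr : irreflexive g) :
  (* (a) *)
  ((forall b : nat, (0 < b)%N -> le_inf (phi g) (phi_ab g 0 b)) /\
   converges_inf (fun b => phi_ab g 0 b) (phi g)) /\
  (* (b) *)
  (forall a a' b b' : nat, (a <= a')%N -> (0 < b)%N -> (b <= b')%N ->
     le_inf (phi_ab g a' b') (phi_ab g a b)) /\
  (* (c) *)
  (forall a b : nat, (0 < b)%N ->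
     match phi_ab g a b with
     | Some t => ((#|T|%:R - a%:R * (alpha g)%:R) / (alpha_bar g)%:R <= t%:R :> rat)%R
     | None => true
     end).
Proof.
split; [split|split].
- by move=> b _; apply: phi_le_phi_ab0.
- rewrite /converges_inf; case E: (phi g) => [k|].
    by exists k => b; apply: phi_ab0_eq_phi.
  move=> M; exists 0 => b _; have := phi_le_phi_ab0 g b; rewrite E.
  by case: (phi_ab g 0 b).
- move=> a a' b b' le_aa' _ le_bb'; apply: le_inf_min_or_inf => t.
  exact: ab_colorable_mono.
- move=> a b _; case E: (phi_ab g a b) => [t|] //.
  have /ab_colorable_card := (min_or_inf_Some E).1.
  rewrite -(ler_nat rat) natrD !natrM => card_le.
  have [-> | alpha_bar_gt0] := posnP (alpha_bar g); first by rewrite invr0 mulr0.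
  by rewrite ler_pdivrMr ?ltr0n // lerBlDr.
Qed.
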